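(* Let $X$ be a quandle, $A$ an abelian group, and $\varphi:X\times X\to A$ a quandle 2-cocycle. Let $E=X\times_\varphi A$ be the abelian extension with operation $(x,a)\star(y,b)=(x*y,\ a+\varphi(x,y))$, and $\pi:E\to X$ the projection $(x,a)\mapsto x$. Then there is a cochain map $\kappa^*:C_b^*(E,\mathbb R)\to C_b^*(X,\mathbb R)$ with $\|\kappa^n f\|_\infty\le\|f\|_\infty$ and $\kappa^n\circ\pi^n_b=\mathrm{id}$ for all $n\ge1$, where $\pi^n_b f=f\circ\pi^{\times n}$. Consequently, the induced map $\pi_b^*:H_b^n(X,\mathbb R)\to H_b^n(E,\mathbb R)$ is injective for every $n\ge1$.
   Context: A quandle 2-cocycle with values in an abelian group $A$ is a map $\varphi:X\times X\to A$ with $\varphi(x,x)=0$ and $\varphi(x,y)+\varphi(x*y,z)=\varphi(x,z)+\varphi(x*z,y*z)$ for all $x,y,z\in X$; then $E=X\times_\varphi A$ is a quandle. For a quandle (or rack) $Y$, $C_b^n(Y,\mathbb R)$ is the space of bounded maps $Y^n\to\mathbb R$ ($Y^0$ a point), with coboundary $\delta f(y_1,\dots,y_n)=\sum_{i=2}^n(-1)^i\big(f(y_1,\dots,\widehat{y_i},\dots,y_n)-f(y_1*y_i,\dots,y_{i-1}*y_i,y_{i+1},\dots,y_n)\big)$; $H_b^n(Y,\mathbb R)$ is the cohomology of this complex. (Abelian groups admit a left-invariant mean, i.e. a positive, normalized, translation-invariant linear functional on bounded real functions.) *)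

From HB Require Import structures.
From mathcomp Require Import all_boot all_order all_algebra.
From Stdlib Require Import Reals.
From mathcomp Require Import Rstruct.
Set Implicit Arguments. Unset Strict Implicit. Unset Printing Implicit Defensive.
Import Order.TTheory GRing.Theory Num.Theory.
Local Open Scope ring_scope.

Definition is_quandle (X : Type) (op : X -> X -> X) : Prop :=
  [/\ (forall x, op x x = x),
      (forall y, bijective (fun x => op x y)) &
      (forall x y z, op (op x y) z = op (op x z) (op y z))].

Definition quandle_2cocycle (X : Type) (op : X -> X -> X) (A : zmodType)
  (phi : X -> X -> A) : Prop :=
  (forall x, phi x x = 0) /\
  (forall x y z, phi x y + phi (op x y) z = phi x z + phi (op x z) (op y z)).

Definition ext_op (X : Type) (op : X -> X -> X) (A : zmodType)
  (phi : X -> X -> A) (p q : X * A) : X * A :=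
  (op p.1 q.1, p.2 + phi p.1 q.1).

Definition cochain (Y : Type) (n : nat) := ('I_n -> Y) -> R.

Definition bounded_cochain (Y : Type) (n : nat) (f : cochain Y n) : Prop :=
  exists M : R, forall y, `|f y| <= M.

Definition del_coord (Y : Type) (n : nat) (y : 'I_n.+1 -> Y) (j : 'I_n.+1)
  : 'I_n -> Y := fun k => y (lift j k).

Definition act_coord (Y : Type) (op : Y -> Y -> Y) (n : nat)
  (y : 'I_n.+1 -> Y) (j : 'I_n.+1) : 'I_n -> Y :=
  fun k => if ltn (nat_of_ord k) (nat_of_ord j) then op (y (lift j k)) (y j) else y (lift j k).

(* Coboundary C^n -> C^{n+1}:
   delta f (y_1..y_{n+1}) = sum_{i=2}^{n+1} (-1)^i (f(..^y_i..) - f(y_1*y_i,..,y_{i-1}*y_i,y_{i+1},..)).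
   Here j is the 0-based index, i = j+1. *)
Definition coboundary (Y : Type) (op : Y -> Y -> Y) (n : nat)
  (f : cochain Y n) : cochain Y n.+1 :=
  fun y => \sum_(j < n.+1 | ltn 0 (nat_of_ord j))
             (-1) ^+ j.+1 * (f (del_coord y j) - f (act_coord op y j)).

Definition pullback_proj (X : Type) (A : zmodType) (n : nat)
  (f : cochain X n) : cochain (X * A) n :=
  fun e => f (fun k => (e k).1).

From HB Require Import structures.
From mathcomp Require Import all_boot all_order all_algebra.
From Stdlib Require Import Reals.
From mathcomp Require Import Rstruct.
From mathcomp Require Import boolp classical_sets filter reals topology normedtype.
Import Order.TTheory GRing.Theory Num.Theory numFieldTopology.Exports numFieldNormedType.Exports.
Local Open Scope ring_scope.
Set Implicit Arguments. Unset Strict Implicit.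

(* An invariant mean on the abelian group A averages a cochain on E = X x_phi A over the
   fibres of E -> X: (kappa f)(x_1, .., x_n) is the mean over (a_1, .., a_n) in A^n of
   f((x_1, a_1), .., (x_n, a_n)).  Averaging does not increase sup-norms and fixes cochains
   pulled back from X.  It commutes with the coboundaries because each face map of E either
   forgets a coordinate, which an iterated mean does not see, or translates the A-coordinates
   by amounts phi(x_i, x_j) depending only on the X-coordinates, which an invariant mean does
   not see either.  So if pi^* f = delta g then f = kappa (delta g) = delta (kappa g).
   The invariant mean is an ultrafilter limit of averages over the boxes
   {i_1 a_1 + .. + i_m a_m | i_j <= k}, which are almost invariant under each a_j. *)

Definition bounded (R : numDomainType) (T : Type) (f : T -> R) :=
  exists M, forall x, `|f x| <= M.

Section UltraLimits.
Local Open Scope classical_set_scope.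

Lemma ultra_fmap (T U : Type) (f : T -> U) (F : set_system T) :
  UltraFilter F -> UltraFilter (f @ F).
Proof.
move=> FU; apply: Build_UltraFilter => G GF FG; apply/funext => A.
apply/propext; split=> [GA|]; last exact: FG.
have [//|FnA] := in_ultra_setVsetC (f @^-1` A) FU.
have /FG GnA : (f @ F) (~` A) by [].
by have [x []] := filter_ex (filterI GA GnA).
Qed.

Lemma ultra_bounded_cvg (R : realType) (T : Type) (F : set_system T) (u : T -> R) :
  UltraFilter F -> bounded u -> cvg (u @ F).
Proof.
move=> FU [B hB]; have := @segment_compact _ (- B) B.
rewrite compact_ultra => /(_ _ (ultra_fmap u FU)) [|l [_ ul]]; last exact: cvgP ul.
apply: (@filterS _ F _ setT); last exact: filterT.
by move=> t _; rewrite /= in_itv /= -ler_norml.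
Qed.

End UltraLimits.

Section BoxAverage.
Variables (R : realFieldType) (A : zmodType).

Lemma norm_avg_le k (u : 'I_k.+1 -> R) B :
  (forall i, `|u i| <= B) -> `|k.+1%:R^-1 * \sum_(i < k.+1) u i| <= B.
Proof.
move=> hu; rewrite normrM normfV normr_nat ler_pdivrMl ?ltr0n //.
apply: le_trans (ler_norm_sum _ _ _) _.
have -> : k.+1%:R * B = \sum_(i < k.+1) B by rewrite sumr_const card_ord mulr_natl.
by apply: ler_sum => i _; exact: hu.
Qed.

Fixpoint box_avg (s : seq A) (k : nat) (f : A -> R) : R :=
  if s is a :: s' then k.+1%:R^-1 * \sum_(i < k.+1) box_avg s' k (fun x => f (x + a *+ i))
  else f 0.

Lemma norm_box_avg_le s k f B : (forall x, `|f x| <= B) -> `|box_avg s k f| <= B.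
Proof.
by elim: s f => [|a s IH] f hf //=; apply: norm_avg_le => i; apply: IH.
Qed.

Lemma box_avgD s k c f g :
  box_avg s k (fun x => c * f x + g x) = c * box_avg s k f + box_avg s k g.
Proof.
elim: s f g => [|a s IH] f g //=.
under eq_bigr do rewrite (IH (fun x => f (x + a *+ _)) (fun x => g (x + a *+ _))).
by rewrite big_split /= -mulr_sumr mulrDr mulrCA.
Qed.

Lemma box_avg_cst s k c : box_avg s k (fun _ => c) = c.
Proof.
elim: s => [|a s IH] //=; under eq_bigr do rewrite IH.
by rewrite sumr_const card_ord -[c *+ _]mulr_natl mulKf ?pnatr_eq0.
Qed.

Lemma box_avg_shift s k f b B : b \in s -> (forall x, `|f x| <= B) ->
  `|box_avg s k (fun x => f (x + b)) - box_avg s k f| <= 2 * B / k.+1%:R.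
Proof.
elim: s f => [//|a s IH] f + hf; rewrite inE /= -mulrBr -sumrB.
case/predU1P => [->|bs]; last first.
  apply: norm_avg_le => i.
  have -> : (fun x => f (x + a *+ i + b)) = (fun x => (fun y => f (y + a *+ i)) (x + b)).
    by apply/funext => x; rewrite addrAC.
  exact: IH.
pose g n := box_avg s k (fun x => f (x + a *+ n)).
have -> : \sum_(i < k.+1) (box_avg s k (fun x => f (x + a *+ i + a)) - g i) =
          g k.+1 - g 0%N.
  rewrite -(telescope_sumr g (leq0n k.+1)) big_mkord.
  apply: eq_bigr => i _; congr (_ - _); congr box_avg; apply/funext => x.
  by rewrite mulrSr addrA.
have hg n : `|g n| <= B by apply: norm_box_avg_le.
rewrite normrM normfV normr_nat mulrC ler_wpM2r ?invr_ge0 ?ler0n //.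
by rewrite -[2]/(1 + 1) mulrDl mul1r (le_trans (ler_normB _ _)) ?lerD.
Qed.

End BoxAverage.

Section InvariantMean.
Variables (R : realType) (A : zmodType).
Local Open Scope classical_set_scope.

Definition box_filter : set_system (seq A * nat) :=
  [set P | exists (s0 : seq A) (k0 : nat),
     forall s k, {subset s0 <= s} -> leq k0 k -> P (s, k)].

Lemma box_filter_proper : ProperFilter box_filter.
Proof.
apply: Build_ProperFilter_ex; first by move=> P [s0 [k0 hP]]; exists (s0, k0); apply: hP.
split; first by exists [::], 0%N.
  move=> P Q [s0 [k0 hP]] [s1 [k1 hQ]]; exists (s0 ++ s1), (maxn k0 k1) => s k hs.
  rewrite geq_max => /andP[hk0 hk1].
  by split; [apply: hP | apply: hQ] => // x hx; apply: hs; rewrite mem_cat hx ?orbT.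
by move=> P Q PQ [s0 [k0 hP]]; exists s0, k0 => s k hs hk; apply/PQ/hP.
Qed.

Definition box_ultra : set_system (seq A * nat) :=
  sval (cid (ultraFilterLemma box_filter_proper)).

Lemma box_ultra_ultra : UltraFilter box_ultra.
Proof. exact: (proj1 (svalP (cid (ultraFilterLemma box_filter_proper)))). Qed.

Lemma box_filter_ultra : box_filter `<=` box_ultra.
Proof. exact: (proj2 (svalP (cid (ultraFilterLemma box_filter_proper)))). Qed.

Existing Instance box_ultra_ultra.

(* Only meaningful for bounded [f]: otherwise [lim] returns an arbitrary value. *)
Definition mean (f : A -> R) : R :=
  lim ((fun i => box_avg i.1 i.2 f) @ box_ultra).

Lemma mean_cvg f : bounded f -> (fun i => box_avg i.1 i.2 f) @ box_ultra --> mean f.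
Proof.
move=> [B hB]; apply: ultra_bounded_cvg; exists B => i; exact: norm_box_avg_le.
Qed.

Lemma mean_cvg_eq f l : (fun i => box_avg i.1 i.2 f) @ box_ultra --> l -> mean f = l.
Proof. exact: cvg_lim. Qed.

Lemma norm_mean_le f B : (forall x, `|f x| <= B) -> `|mean f| <= B.
Proof.
move=> hB; rewrite ler_norml.
have cB : closed ([set y : R | - B <= y] `&` [set y | y <= B]).
  by apply: closedI; [exact: closed_ge | exact: closed_le].
have bf : bounded f by exists B.
suff [-> ->] : ([set y | - B <= y] `&` [set y | y <= B]) (mean f) by [].
apply: (closed_cvg _ cB) (mean_cvg bf); apply: nearW => i.
by apply/andP; rewrite -ler_norml; apply: norm_box_avg_le.
Qed.

Lemma mean_cst c : mean (fun _ => c) = c.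
Proof.
apply: mean_cvg_eq; under eq_fun do rewrite box_avg_cst; exact: cvg_cst.
Qed.

Lemma meanD c f g : bounded f -> bounded g ->
  mean (fun x => c * f x + g x) = c * mean f + mean g.
Proof.
move=> bf bg; apply: mean_cvg_eq; under eq_fun do rewrite box_avgD.
by apply: cvgD; [apply: cvgZ; [exact: cvg_cst|] |]; apply: mean_cvg.
Qed.

Lemma mean_shift f b : bounded f -> mean (fun x => f (x + b)) = mean f.
Proof.
move=> bf; case: (bf) => B hB; have bfb : bounded (fun x => f (x + b)) by exists B.
pose d i := box_avg i.1 i.2 (fun x => f (x + b)) - box_avg i.1 i.2 f.
have to_diff : d @ box_ultra --> mean (fun x => f (x + b)) - mean f.
  by apply: cvgB; apply: mean_cvg.
have to_0 : d @ box_ultra --> 0.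
  apply/cvgrPdist_lt => e e0; apply: box_filter_ultra.
  have B0 : 0 <= B := le_trans (normr_ge0 _) (hB 0).
  exists [:: b], (Num.Def.archi_bound (e^-1 * (2 * B))) => s k hs hk.
  rewrite sub0r normrN (le_lt_trans (box_avg_shift k (hs b (mem_head _ _)) hB)) //.
  rewrite ltr_pdivrMr ?ltr0n // -ltr_pdivrMl //.
  apply: lt_le_trans (archi_boundP _) _; last by rewrite ler_nat leqW.
  by rewrite mulr_ge0 ?invr_ge0 ?(ltW e0) ?mulr_ge0 ?ler0n.
exact/subr0_eq/(cvg_unique _ to_diff to_0).
Qed.

End InvariantMean.

Lemma lift_lift0 n (j : 'I_n.+1) (k : 'I_n) :
  lift (lift ord0 j) (lift ord0 k) = lift ord0 (lift j k).
Proof. by apply: val_inj; rewrite /= /bump /= !add1n ltnS addnS. Qed.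

Lemma lift_lift0_ord0 n (j : 'I_n.+1) : lift (lift ord0 j) ord0 = ord0 :> 'I_n.+2.
Proof. exact: val_inj. Qed.

Section ProductMean.
Variables (R : realType) (A : zmodType).

Definition ocons n (a : A) (b : 'I_n -> A) : 'I_n.+1 -> A :=
  fun i => if unlift ord0 i is Some j then b j else a.

Lemma ocons0 n a (b : 'I_n -> A) : ocons a b ord0 = a.
Proof. by rewrite /ocons unlift_none. Qed.

Lemma oconsS n a (b : 'I_n -> A) k : ocons a b (lift ord0 k) = b k.
Proof. by rewrite /ocons liftK. Qed.

(* The iterated mean on A^n.  Iterating (rather than taking any invariant mean on A^n)
   is what makes [prod_mean_lift] hold. *)
Fixpoint prod_mean n : (('I_n -> A) -> R) -> R :=
  if n is n'.+1 then fun F => mean (fun a => prod_mean (fun b => F (ocons a b)))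
  else fun F => F (fun _ => 0).

Lemma prod_meanS n (F : ('I_n.+1 -> A) -> R) :
  prod_mean F = mean (fun a => prod_mean (fun b => F (ocons a b))).
Proof. by []. Qed.

Lemma norm_prod_mean_le n (F : ('I_n -> A) -> R) B :
  (forall a, `|F a| <= B) -> `|prod_mean F| <= B.
Proof.
elim: n F => [|n IH] F hF /=; first exact: hF.
by apply: norm_mean_le => a; apply: IH.
Qed.

Lemma bounded_prod_mean T n (F : T -> ('I_n -> A) -> R) B :
  (forall t a, `|F t a| <= B) -> bounded (fun t => prod_mean (F t)).
Proof. by move=> hF; exists B => t; apply: norm_prod_mean_le. Qed.

Lemma prod_mean_cst n c : prod_mean (fun _ : 'I_n -> A => c) = c.
Proof. by elim: n => [|n IH] //=; rewrite IH mean_cst. Qed.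

Lemma prod_meanD n c (F G : ('I_n -> A) -> R) : bounded F -> bounded G ->
  prod_mean (fun a => c * F a + G a) = c * prod_mean F + prod_mean G.
Proof.
elim: n F G => [|n IH] F G // [BF hF] [BG hG] /=.
rewrite -meanD; last 2 first.
- exact: (bounded_prod_mean (F := fun a b => F (ocons a b)) (fun _ _ => hF _)).
- exact: (bounded_prod_mean (F := fun a b => G (ocons a b)) (fun _ _ => hG _)).
by congr mean; apply/funext => a; apply: IH; [exists BF | exists BG].
Qed.

Lemma prod_mean_shift n (F : ('I_n -> A) -> R) (c : 'I_n -> A) : bounded F ->
  prod_mean (fun a => F (fun k => a k + c k)) = prod_mean F.
Proof.
elim: n F c => [|n IH] F c [B hB] /=.
  by congr F; apply/funext => -[].
rewrite -[RHS](mean_shift (c ord0)); last first.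
  exact: (bounded_prod_mean (F := fun a b => F (ocons a b)) (fun _ _ => hB _)).
congr mean; apply/funext => a.
rewrite -[RHS](IH _ (fun k => c (lift ord0 k))); last by exists B.
congr prod_mean; apply/funext => b; congr F; apply/funext => i.
by case: (unliftP ord0 i) => [k|] ->; rewrite ?ocons0 ?oconsS.
Qed.

Lemma prod_mean_lift0 n (G : ('I_n -> A) -> R) :
  prod_mean (fun a : 'I_n.+1 -> A => G (fun k => a (lift ord0 k))) = prod_mean G.
Proof.
rewrite /= -[RHS](@mean_cst _ A); congr mean; apply/funext => a.
by congr prod_mean; apply/funext => b; congr G; apply/funext => k; rewrite oconsS.
Qed.

Lemma prod_mean_lift n (G : ('I_n -> A) -> R) (j : 'I_n.+1) : bounded G ->
  prod_mean (fun a : 'I_n.+1 -> A => G (fun k => a (lift j k))) = prod_mean G.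
Proof.
elim: n G j => [|n IH] G j [B hB]; case: (unliftP ord0 j) => [j'|] ->;
  rewrite ?prod_mean_lift0 //; first by case: j'.
rewrite !prod_meanS; congr mean; apply/funext => a.
rewrite -(IH _ j'); last by exists B.
congr prod_mean; apply/funext => b; congr G; apply/funext => k.
by case: (unliftP ord0 k) => [k'|] ->; rewrite ?lift_lift0 ?lift_lift0_ord0 ?oconsS ?ocons0.
Qed.

Lemma prod_meanZ n c (F : ('I_n -> A) -> R) : bounded F ->
  prod_mean (fun a => c * F a) = c * prod_mean F.
Proof.
move=> bF; have b0 : bounded (fun _ : 'I_n -> A => 0 : R) by exists 0 => _; rewrite normr0.
rewrite -[RHS]addr0 -(prod_mean_cst n 0) -prod_meanD //.
by congr prod_mean; apply/funext => a; rewrite addr0.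
Qed.

Lemma prod_meanZB n c (F G : ('I_n -> A) -> R) : bounded F -> bounded G ->
  prod_mean (fun a => c * (F a - G a)) = c * (prod_mean F - prod_mean G).
Proof.
move=> bF [B hB]; have bG : bounded (fun a => (- c) * G a).
  by exists (`|c| * B) => a; rewrite normrM normrN ler_wpM2l.
rewrite mulrBr -mulNr -[- c * _]prod_meanZ; last by exists B.
rewrite -prod_meanD //.
by congr prod_mean; apply/funext => a; rewrite mulrBr mulNr.
Qed.

Lemma bounded_sum T (I : Type) (r : seq I) (P : pred I) (F : I -> T -> R) :
  (forall j, bounded (F j)) -> bounded (fun t => \sum_(j <- r | P j) F j t).
Proof.
move=> bF; elim: r => [|j r [B hB]]; first by exists 0 => t; rewrite big_nil normr0.
have [Bj hj] := bF j; exists (Bj + B) => t; rewrite big_cons.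
have Bj0 : 0 <= Bj := le_trans (normr_ge0 _) (hj t).
case: (P j); first by rewrite (le_trans (ler_normD _ _)) ?lerD.
by rewrite (le_trans (hB t)) ?lerDr.
Qed.

Lemma boundedZB T c (F G : T -> R) : bounded F -> bounded G ->
  bounded (fun t => c * (F t - G t)).
Proof.
move=> [BF hF] [BG hG]; exists (`|c| * (BF + BG)) => t.
by rewrite normrM ler_wpM2l // (le_trans (ler_normB _ _)) ?lerD.
Qed.

Lemma prod_mean_sum n (I : Type) (r : seq I) (P : pred I) (F : I -> ('I_n -> A) -> R) :
  (forall j, bounded (F j)) ->
  prod_mean (fun a => \sum_(j <- r | P j) F j a) = \sum_(j <- r | P j) prod_mean (F j).
Proof.
move=> bF; elim: r => [|j r IH].
  by rewrite big_nil; under eq_fun do rewrite big_nil; rewrite prod_mean_cst.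
rewrite big_cons; under eq_fun do rewrite big_cons.
case: (P j) => //; rewrite -IH -[prod_mean (F j)]mul1r -prod_meanD //; last exact: bounded_sum.
by congr prod_mean; apply/funext => a; rewrite mul1r.
Qed.

End ProductMean.

Section FiberMean.
Variables (X : Type) (A : zmodType).

Definition fiber_mean n (f : cochain (X * A) n) : cochain X n :=
  fun x => prod_mean (fun a => f (fun k => (x k, a k))).

Lemma norm_fiber_mean_le n (f : cochain (X * A) n) M :
  (forall e, `|f e| <= M) -> forall x, `|fiber_mean f x| <= M.
Proof. by move=> hf x; apply: norm_prod_mean_le. Qed.

Lemma bounded_fiber_mean n (f : cochain (X * A) n) :
  bounded_cochain f -> bounded_cochain (fiber_mean f).
Proof. by move=> [B hB]; exists B; apply: norm_fiber_mean_le. Qed.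

Lemma fiber_meanD n (f g : cochain (X * A) n) c :
  bounded_cochain f -> bounded_cochain g ->
  fiber_mean (fun e => c * f e + g e) = (fun x => c * fiber_mean f x + fiber_mean g x).
Proof.
by move=> [Bf hf] [Bg hg]; apply/funext => x; apply: prod_meanD; [exists Bf | exists Bg].
Qed.

Lemma fiber_mean_pullback n (f : cochain X n) : fiber_mean (@pullback_proj X A n f) = f.
Proof. by apply/funext => x; rewrite /fiber_mean /pullback_proj /= prod_mean_cst. Qed.

Lemma act_coord_ext_op (op : X -> X -> X) (phi : X -> X -> A) n
    (x : 'I_n.+1 -> X) (a : 'I_n.+1 -> A) j :
  act_coord (ext_op op phi) (fun k => (x k, a k)) j =
  (fun k => (act_coord op x j k,
             a (lift j k) + if ltn k j then phi (x (lift j k)) (x j) else 0)).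
Proof.
by apply/funext => k; rewrite /act_coord /ext_op; case: ifP; rewrite ?addr0.
Qed.

Lemma fiber_mean_coboundary (op : X -> X -> X) (phi : X -> X -> A) n
    (f : cochain (X * A) n) :
  bounded_cochain f -> fiber_mean (coboundary (ext_op op phi) f) = coboundary op (fiber_mean f).
Proof.
move=> [B hB]; have bf T (h : T -> 'I_n -> X * A) : bounded (fun t => f (h t)) by exists B.
apply/funext => x; rewrite /fiber_mean /coboundary prod_mean_sum; last first.
  by move=> j; apply: boundedZB; apply: bf.
apply: eq_bigr => j _; rewrite prod_meanZB ?bf //; congr (_ * (_ - _)).
  exact: (prod_mean_lift (G := fun b => f (fun k => (del_coord x j k, b k))) j (bf _ _)).
under eq_fun do rewrite act_coord_ext_op.
rewrite (prod_mean_lift (G := fun b => f (fun k => (act_coord op x j k,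
   b k + if ltn k j then phi (x (lift j k)) (x j) else 0))) j (bf _ _)).
exact: (prod_mean_shift (F := fun b => f (fun k => (act_coord op x j k, b k))) _ (bf _ _)).
Qed.

End FiberMean.

Unset Implicit Arguments.

Theorem mainTheorem18 (X : Type) (op : X -> X -> X) (A : zmodType)
  (phi : X -> X -> A) :
  is_quandle op -> quandle_2cocycle op phi ->
  (exists kappa : forall n : nat, cochain (X * A) n -> cochain X n,
     (forall n (f : cochain (X * A) n), bounded_cochain f ->
        bounded_cochain (kappa n f)) /\
     (forall n (f g : cochain (X * A) n) (c : R),
        bounded_cochain f -> bounded_cochain g ->
        kappa n (fun e => c * f e + g e) = (fun x => c * kappa n f x + kappa n g x)) /\
     (forall n (f : cochain (X * A) n), bounded_cochain f ->
        kappa n.+1 (coboundary (ext_op op phi) f) = coboundary op (kappa n f)) /\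
     (forall n (f : cochain (X * A) n), leq 1 n -> bounded_cochain f ->
        forall M : R, (forall e, `|f e| <= M) -> forall x, `|kappa n f x| <= M) /\
     (forall n (f : cochain X n), leq 1 n -> bounded_cochain f ->
        kappa n (@pullback_proj X A _ f) = f)) /\
  (forall m (f : cochain X m.+1), bounded_cochain f ->
     coboundary op f = (fun _ => 0) ->
     (exists g : cochain (X * A) m, bounded_cochain g /\
        @pullback_proj X A _ f = coboundary (ext_op op phi) g) ->
     exists h : cochain X m, bounded_cochain h /\ f = coboundary op h).
Proof.
move=> _ _; split.
  exists (@fiber_mean X A); split; [|split; [|split; [|split]]].
  - by move=> n f; apply: bounded_fiber_mean.
  - by move=> n f g c; apply: fiber_meanD.
  - by move=> n f; apply: fiber_mean_coboundary.
  - by move=> n f _ _; apply: norm_fiber_mean_le.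
  - by move=> n f _ _; apply: fiber_mean_pullback.
move=> m f _ _ [g [bg pif]]; exists (fiber_mean g); split; first exact: bounded_fiber_mean.
by rewrite -(fiber_mean_pullback A f) pif fiber_mean_coboundary.
Qed.
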